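(* Suppose $S\subseteq\mathbb{N}^{\mathbb{N}}$ is guessable. Then $S$ is defined by some sentence $\exists x\,\forall y\,\phi$ of $\mathscr{L}_{\max}$ and also by some sentence $\forall x\,\exists y\,\psi$ of $\mathscr{L}_{\max}$, where $\phi$ and $\psi$ are quantifier-free.
   Context: A function $G:\mathbb{N}^{<\mathbb{N}}\to\{0,1\}$ ($\mathbb{N}^{<\mathbb{N}}$ = finite sequences of naturals) is a guesser for $S\subseteq\mathbb{N}^{\mathbb{N}}$ if for every $f:\mathbb{N}\to\mathbb{N}$ there is $m>0$ such that for all $n>m$, $G(f(0),\ldots,f(n))$ equals $1$ if $f\in S$ and $0$ if $f\notin S$; $S$ is guessable if it has a guesser. The language $\mathscr{L}_{\max}$ is a first-order language extended with ellipses: constant symbols $\mathbf{n}$ (also $\bar n$) for each $n\in\mathbb{N}$; an $n$-ary function symbol $\tilde w$ for each $w:\mathbb{N}^n\to\mathbb{N}$ ($n>0$); an $n$-ary predicate symbol $\tilde p$ for each $p\subseteq\mathbb{N}^n$ ($n>0$); an $\mathbb{N}^{<\mathbb{N}}$-ary function symbol $\tilde G$ for each $G:\mathbb{N}^{<\mathbb{N}}\to\mathbb{N}$ (applicable to any finite number of arguments); a unary function symbol $\mathbf{f}$; and a symbol $\cdots_x$ for each variable $x$. Besides the usual terms, for $\mathbb{N}^{<\mathbb{N}}$-ary $G$, terms $u,v$ and variable $x$, $G(u(\mathbf{0}),\cdots_x,u(v))$ is a term with free variables $(FV(u)\setminus\{x\})\cup FV(v)$. Formulas are built as usual. For $f:\mathbb{N}\to\mathbb{N}$,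 $\mathscr{M}_f$ is the structure on $\mathbb{N}$ interpreting every symbol as the object it names and $\mathbf{f}$ as $f$; terms are evaluated as usual, plus $G(u(\mathbf{0}),\cdots_x,u(v))^{s}=G\big(u(x|\mathbf{0})^{s},\ldots,u(x|\overline{v^{s}})^{s}\big)$ under an assignment $s$, where $u(x|c)$ is substitution of the constant $c$ for $x$ in $u$. A sentence $\phi$ defines $S\subseteq\mathbb{N}^{\mathbb{N}}$ if for every $f:\mathbb{N}\to\mathbb{N}$, $\mathscr{M}_f\models\phi$ iff $f\in S$. *)

From mathcomp Require Import all_boot.
Set Implicit Arguments. Unset Strict Implicit. Unset Printing Implicit Defensive.

Definition assignment := nat -> nat.
Definition upd (s : assignment) (x i : nat) : assignment :=
  fun z => if z == x then i else s z.

(* Terms of L_max.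
   - TVar x          : variable x
   - TConst n        : constant symbol  \bar n
   - TFun n w args   : the (n+1)-ary function symbol ~w for w : N^(n+1) -> N
   - TF t            : the unary function symbol  f  applied to t
   - TG G k args     : the N^{<N}-ary symbol ~G applied to k arguments
   - TEll G x u v    : the ellipsis term  G(u(0), ..._x, u(v))            *)
Inductive term : Type :=
| TVar (x : nat)
| TConst (n : nat)
| TFun (n : nat) (w : n.+1.-tuple nat -> nat) (args : 'I_n.+1 -> term)
| TF (t : term)
| TG (G : seq nat -> nat) (k : nat) (args : 'I_k -> term)
| TEll (G : seq nat -> nat) (x : nat) (u v : term).

Inductive formula : Type :=
| FEq (t1 t2 : term)
| FPred (n : nat) (p : n.+1.-tuple nat -> Prop) (args : 'I_n.+1 -> term)
| FNot (A : formula)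
| FAnd (A B : formula)
| FOr (A B : formula)
| FImp (A B : formula)
| FForall (x : nat) (A : formula)
| FExists (x : nat) (A : formula).

Fixpoint free_in_term (z : nat) (t : term) : Prop :=
  match t with
  | TVar y => z = y
  | TConst _ => False
  | TFun n _ args => exists i : 'I_n.+1, free_in_term z (args i)
  | TF t => free_in_term z t
  | TG _ k args => exists i : 'I_k, free_in_term z (args i)
  | TEll _ x u v => (free_in_term z u /\ z <> x) \/ free_in_term z v
  end.

Fixpoint free_in (z : nat) (A : formula) : Prop :=
  match A with
  | FEq t1 t2 => free_in_term z t1 \/ free_in_term z t2
  | FPred n _ args => exists i : 'I_n.+1, free_in_term z (args i)
  | FNot A => free_in z A
  | FAnd A B | FOr A B | FImp A B => free_in z A \/ free_in z B
  | FForall x A | FExists x A => free_in z A /\ z <> x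
  end.

Definition sentence (A : formula) : Prop := forall z, ~ free_in z A.

Fixpoint quantifier_free (A : formula) : Prop :=
  match A with
  | FEq _ _ | FPred _ _ _ => True
  | FNot A => quantifier_free A
  | FAnd A B | FOr A B | FImp A B => quantifier_free A /\ quantifier_free B
  | FForall _ _ | FExists _ _ => False
  end.

(* Evaluation of terms in M_f under assignment s.  For the ellipsis term,
   u(x|\bar i)^s is computed as u^{s[x:=i]} (substitution lemma). *)
Fixpoint eval (f : nat -> nat) (s : assignment) (t : term) : nat :=
  match t with
  | TVar y => s y
  | TConst n => n
  | TFun n w args => w [tuple eval f s (args i) | i < n.+1]
  | TF t => f (eval f s t)
  | TG G k args => G [seq eval f s (args i) | i <- enum 'I_k]
  | TEll G x u v =>
      G [seq eval f (upd s x i) u | i <- iota 0 (eval f s v).+1]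
  end.

Fixpoint sat (f : nat -> nat) (s : assignment) (A : formula) : Prop :=
  match A with
  | FEq t1 t2 => eval f s t1 = eval f s t2
  | FPred n p args => p [tuple eval f s (args i) | i < n.+1]
  | FNot A => ~ sat f s A
  | FAnd A B => sat f s A /\ sat f s B
  | FOr A B => sat f s A \/ sat f s B
  | FImp A B => sat f s A -> sat f s B
  | FForall x A => forall i, sat f (upd s x i) A
  | FExists x A => exists i, sat f (upd s x i) A
  end.

(* M_f |= phi for a sentence phi (the assignment is irrelevant for sentences). *)
Definition models (f : nat -> nat) (A : formula) : Prop := sat f (fun _ => 0) A.

Definition defines (A : formula) (S : (nat -> nat) -> Prop) : Prop :=
  sentence A /\ forall f, models f A <-> S f.

Definition guesser (G : seq nat -> bool) (S : (nat -> nat) -> Prop) : Prop :=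
  forall f : nat -> nat, exists m, 0 < m /\
    forall n, m < n -> (G (mkseq f n.+1) = true <-> S f).

Definition guessable (S : (nat -> nat) -> Prop) : Prop :=
  exists G, guesser G S.

(* A guesser G for S converges on every f to the truth value of "f ∈ S", so
   f ∈ S holds iff G eventually answers 1 along the prefixes of f, and also iff
   G answers 1 infinitely often.  The prefix answer G(f(0),...,f(y)) is a
   single ellipsis term of L_max in the free variable y, so both conditions
   are quantifier-free matrices under ∃x∀y and ∀x∃y respectively. *)
From mathcomp Require Import all_boot.

Set Implicit Arguments.
Unset Strict Implicit.

Section Guesser.

Variables (G : seq nat -> bool) (S : (nat -> nat) -> Prop).
Hypothesis guessG : guesser G S.

Lemma guesser_eventually (f : nat -> nat) :
  (exists m, forall n, m < n -> G (mkseq f n.+1)) <-> S f.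
Proof.
have [m [_ Gm]] := guessG f; split=> [[k Gk] | Sf].
- have lt_m : m < (maxn k m).+1 by rewrite ltnS leq_maxr.
  by apply/(Gm _ lt_m)/Gk; rewrite ltnS leq_maxl.
- by exists m => n lt_mn; apply/(Gm _ lt_mn).
Qed.

Lemma guesser_infinitely_often (f : nat -> nat) :
  (forall k, exists2 n, k < n & G (mkseq f n.+1)) <-> S f.
Proof.
have [m [_ Gm]] := guessG f; split=> [Ginf | Sf k].
- by have [n lt_mn Gn] := Ginf m; apply/(Gm _ lt_mn).
- have lt_m : m < (maxn k m).+1 by rewrite ltnS leq_maxr.
  by exists (maxn k m).+1; [rewrite ltnS leq_maxl | apply/(Gm _ lt_m)].
Qed.

End Guesser.

(* G(f(0), ..._z, f(y)) with y = variable 1 and z = variable 2; the boolean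
   answer is read as 0/1. *)
Definition prefix_answer (G : seq nat -> bool) : term :=
  TEll (fun s => G s : nat) 2 (TF (TVar 2)) (TVar 1).

Definition answer_args (G : seq nat -> bool) (i : 'I_3) : term :=
  match val i with 0 => TVar 0 | 1 => TVar 1 | _ => prefix_answer G end.

Lemma eval_answer_args G f s :
  [tuple eval f s (answer_args G i) | i < 3] =
  [tuple s 0; s 1; G (mkseq f (s 1).+1) : nat].
Proof.
apply: eq_from_tnth => i; rewrite tnth_mktuple (tnth_nth 0).
by case: i => -[|[|[|k]]].
Qed.

Lemma free_in_answer_args G z i :
  free_in_term z (answer_args G i) -> z = 0 \/ z = 1.
Proof.
case: i => -[|[|[|k]]] lt_i3 //=; [by left | by right |].
by case=> [[] | ]; [ | right].
Qed.

Definition eventually_pred (t : 3.-tuple nat) : Prop :=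
  nth 0 t 0 < nth 0 t 1 -> nth 0 t 2 = 1.

Definition infinitely_often_pred (t : 3.-tuple nat) : Prop :=
  nth 0 t 0 < nth 0 t 1 /\ nth 0 t 2 = 1.

Definition eventually_answers (G : seq nat -> bool) : formula :=
  FExists 0 (FForall 1 (FPred eventually_pred (answer_args G))).

Definition infinitely_often_answers (G : seq nat -> bool) : formula :=
  FForall 0 (FExists 1 (FPred infinitely_often_pred (answer_args G))).

Lemma sentence_eventually_answers G : sentence (eventually_answers G).
Proof. by move=> z [[[i /free_in_answer_args [] ->]]]. Qed.

Lemma sentence_infinitely_often_answers G : sentence (infinitely_often_answers G).
Proof. by move=> z [[[i /free_in_answer_args [] ->]]]. Qed.

Lemma models_eventually_answers G f :
  models f (eventually_answers G) <->
  exists m, forall n, m < n -> G (mkseq f n.+1).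
Proof.
split=> -[m Gm]; exists m => n.
- have := Gm n; rewrite eval_answer_args /eventually_pred /upd /=.
  by case: (G _) => // /[apply].
- by rewrite eval_answer_args /eventually_pred /upd /= => /Gm ->.
Qed.

Lemma models_infinitely_often_answers G f :
  models f (infinitely_often_answers G) <->
  forall k, exists2 n, k < n & G (mkseq f n.+1).
Proof.
split=> Ginf k; have := Ginf k.
- case=> n; rewrite eval_answer_args /infinitely_often_pred /upd /= => -[lt_kn].
  by exists n => //; case: (G _) b.
- case=> n lt_kn Gn; exists n.
  by rewrite eval_answer_args /infinitely_often_pred /upd /= Gn.
Qed.

Theorem lemma4p2 (S : (nat -> nat) -> Prop) :
  guessable S ->
  (exists (x y : nat) (phi : formula),
      quantifier_free phi /\ defines (FExists x (FForall y phi)) S) /\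
  (exists (x y : nat) (psi : formula),
      quantifier_free psi /\ defines (FForall x (FExists y psi)) S).
Proof.
case=> G guessG; split.
- exists 0, 1, (FPred eventually_pred (answer_args G)); do 2!split => //.
    exact: sentence_eventually_answers.
  move=> f; apply: iff_trans (models_eventually_answers G f) _.
  exact: guesser_eventually.
- exists 0, 1, (FPred infinitely_often_pred (answer_args G)); do 2!split => //.
    exact: sentence_infinitely_often_answers.
  move=> f; apply: iff_trans (models_infinitely_often_answers G f) _.
  exact: guesser_infinitely_often.
Qed.
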